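(* Let $(X,r)$ be a non-degenerate involutive set-theoretic solution of the Yang–Baxter equation with $|X|=n$, identified with $\{1,\dots,n\}$, and let $(\mathcal{X}^2,\tilde r)$ be the induced pair. Then, for every natural number $k\ge 1$, there exists a non-degenerate involutive set-theoretic solution of size $n^{2^k}$ induced from $(X,r)$, namely the one obtained by applying the construction $(X,r)\mapsto(\mathcal{X}^2,\tilde r)$ iteratively $k$ times. Furthermore: (i) if $(X,r)$ is irretractable, resp. a multipermutation solution of level $\ell$, then $(\mathcal{X}^2,\tilde r)$ is irretractable, resp. a multipermutation solution of level $\ell$; (ii) if $(X,r)$ is decomposable, then $(\mathcal{X}^2,\tilde r)$ is decomposable; (iii) if $(X,r)$ is of class $m$, then $(\mathcal{X}^2,\tilde r)$ is of class $m$. Assume moreover that $(X,r)$ is indecomposable and satisfies condition $(\mathfrak{C})$: there exists a natural number $\ell$ such that for every $1\le s\le n$ there exist $1\le i_1,\dots,i_\ell\le n$ with $\sigma_{i_1}\sigma_{i_2}\cdots\sigma_{i_\ell}(1)=s$. Then $(\mathcal{X}^2,\tilde r)$ is also indecomposable and satisfies condition $(\mathfrak{C})$ (with respect to its own permutations $g_i^k$ and the element $T_1^1$ in place of $1$). Moreover, the process can be repeated iteratively to obtain indecomposable solutions of size $n^{2^k}$ for every natural number $k\ge1$.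
   Context: A set-theoretic solution of the Yang–Baxter equation is a pair $(X,r)$ with $X$ a set and $r:X\times X\to X\times X$, written $r(x,y)=(\sigma_x(y),\gamma_y(x))$, such that $r^{12}r^{23}r^{12}=r^{23}r^{12}r^{23}$ on $X^3$, where $r^{12}=r\times \mathrm{Id}_X$, $r^{23}=\mathrm{Id}_X\times r$. It is non-degenerate if all $\sigma_x,\gamma_x$ are bijections of $X$, and involutive if $r\circ r=\mathrm{Id}_{X\times X}$. For $|X|=n$ we identify $X$ with $\{1,\dots,n\}$, so the $\sigma_i,\gamma_j$ are permutations of $\{1,\dots,n\}$. Induced pair: $\mathcal{X}^2=\{T_i^k: 1\le i,k\le n\}$ is a set of $n^2$ symbols in bijection with $X\times X$, and $\tilde r:\mathcal{X}^2\times\mathcal{X}^2\to\mathcal{X}^2\times\mathcal{X}^2$ is $\tilde r(T_i^k,T_j^l)=(T_{\sigma_i(j)}^{\sigma_k(l)},T_{\gamma_j(i)}^{\gamma_l(k)})$; we write $g_i^k(T_j^l)=T_{\sigma_i(j)}^{\sigma_k(l)}$ and $f_j^l(T_i^k)=T_{\gamma_j(i)}^{\gamma_l(k)}$, so $\tilde r(T_i^k,T_j^l)=(g_i^k(T_j^l),f_j^l(T_i^k))$. A subset $Y\subseteq X$ is invariant if $r(Y\times Y)\subseteq Y\times Y$, and non-degenerate invariant if moreover $(Y,r|_{Y^2})$ is a non-degenerate involutive solution; $(X,r)$ is decomposable if $X$ is the union of two non-empty disjoint non-degenerate invariant subsets, and indecomposable otherwise. Retraction: $x\sim y$ iff $\sigma_x=\sigma_y$;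 $\mathrm{Ret}(X,r)=(X/\!\sim, r')$ with $r'([x],[y])=([\sigma_x(y)],[\gamma_y(x)])$, and $\mathrm{Ret}^k=\mathrm{Ret}(\mathrm{Ret}^{k-1})$. $(X,r)$ is a multipermutation solution of level $\ell$ if $\ell$ is the smallest natural number with $|\mathrm{Ret}^\ell(X,r)|=1$; if such $\ell$ exists $(X,r)$ is retractable, otherwise irretractable. Class: with $D(x)=\sigma_x^{-1}(x)$, $(X,r)$ is of class $m$ if $m$ is the minimal natural number such that $\sigma_x\sigma_{D(x)}\sigma_{D^2(x)}\cdots\sigma_{D^{m-1}(x)}=\mathrm{Id}_X$ for every $x\in X$. *)

From HB Require Import structures.
From mathcomp Require Import all_boot.
Unset Printing Implicit Defensive.

Definition sol := {T : finType & (T * T -> T * T)%type}.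
Definition carrier (S : sol) : finType := projT1 S.
Definition rmap (S : sol) : carrier S * carrier S -> carrier S * carrier S := projT2 S.

(* r(x,y) = (sigma_x(y), gamma_y(x)) *)
Definition sig_ (S : sol) (x y : carrier S) : carrier S := (rmap S (x, y)).1.
Definition gam (S : sol) (y x : carrier S) : carrier S := (rmap S (x, y)).2.

(* r^{12} = r x Id and r^{23} = Id x r on X^3, triples written (x,y,z) = ((x,y),z) *)
Definition r12 (T : Type) (r : T * T -> T * T) (t : T * T * T) : T * T * T :=
  let: (x, y, z) := t in let: (a, b) := r (x, y) in (a, b, z).
Definition r23 (T : Type) (r : T * T -> T * T) (t : T * T * T) : T * T * T :=
  let: (x, y, z) := t in let: (b, c) := r (y, z) in (x, b, c).

Definition is_YBE (S : sol) : Prop :=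
  forall t, r12 _ (rmap S) (r23 _ (rmap S) (r12 _ (rmap S) t))
          = r23 _ (rmap S) (r12 _ (rmap S) (r23 _ (rmap S) t)).
Definition nondeg (S : sol) : Prop :=
  forall x, bijective (sig_ S x) /\ bijective (gam S x).
Definition involutive (S : sol) : Prop := forall p, rmap S (rmap S p) = p.

Definition nd_inv_sol (S : sol) : Prop := [/\ is_YBE S, nondeg S & involutive S].

(* the solution (X, r) with X = {0,...,n-1} (= {1,...,n} shifted) *)
Definition sol_of (n : nat) (r : 'I_n * 'I_n -> 'I_n * 'I_n) : sol :=
  existT (fun T : finType => (T * T -> T * T)%type) ('I_n : finType) r.

(* Induced pair: T_i^k <-> (i,k);
   r~(T_i^k, T_j^l) = (T_{sigma_i(j)}^{sigma_k(l)}, T_{gamma_j(i)}^{gamma_l(k)}) *)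
Definition induced_map (S : sol) (p : (carrier S * carrier S) * (carrier S * carrier S))
  : (carrier S * carrier S) * (carrier S * carrier S) :=
  let: ((i, k), (j, l)) := p in
  ((sig_ S i j, sig_ S k l), (gam S j i, gam S l k)).
Definition induced (S : sol) : sol :=
  existT (fun T : finType => (T * T -> T * T)%type)
    ((carrier S * carrier S)%type : finType) (induced_map S).

(* Retraction: x ~ y iff sigma_x = sigma_y; Ret(X,r) = (X/~, r') *)
Definition cls (S : sol) (x : carrier S) : {set carrier S} :=
  [set y | [forall z, sig_ S y z == sig_ S x z]].
Definition is_cls (S : sol) (A : {set carrier S}) : bool := [exists x, A == cls S x].
Definition ret_carrier (S : sol) := {A : {set carrier S} | is_cls S A}.
Definition to_ret (S : sol) (x : carrier S) : ret_carrier S :=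
  exist _ (cls S x) (introT existsP (ex_intro _ x (eqxx (cls S x)))).
Definition rep (S : sol) (A : ret_carrier S) : carrier S :=
  xchoose (elimT existsP (valP A)).
Definition ret_map (S : sol) (p : ret_carrier S * ret_carrier S)
  : ret_carrier S * ret_carrier S :=
  let: (A, B) := p in
  (to_ret S (sig_ S (rep S A) (rep S B)), to_ret S (gam S (rep S B) (rep S A))).
Definition ret (S : sol) : sol :=
  existT (fun T : finType => (T * T -> T * T)%type)
    (ret_carrier S : finType) (ret_map S).

Definition mp_level (S : sol) (l : nat) : Prop :=
  #|carrier (iter l ret S)| = 1 /\ (forall l', l' < l -> #|carrier (iter l' ret S)| <> 1).
Definition irretractable (S : sol) : Prop :=
  forall l, #|carrier (iter l ret S)| <> 1.

(* Class: D(x) = sigma_x^{-1}(x) *)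
Definition Dmap (S : sol) (x : carrier S) : carrier S :=
  odflt x [pick y | sig_ S x y == x].
(* sigma_x o sigma_{D x} o ... o sigma_{D^{m-1} x} *)
Definition sig_chain (S : sol) (x : carrier S) (m : nat) : carrier S -> carrier S :=
  foldr (fun i f => sig_ S (iter i (Dmap S) x) \o f) id (iota 0 m).
Definition class_eq (S : sol) (m : nat) : Prop :=
  forall x y, sig_chain S x m y = y.
Definition is_class (S : sol) (m : nat) : Prop :=
  [/\ 0 < m, class_eq S m & forall m', 0 < m' -> m' < m -> ~ class_eq S m'].

Definition invariant (S : sol) (Y : {set carrier S}) : Prop :=
  forall x y, x \in Y -> y \in Y ->
    (rmap S (x, y)).1 \in Y /\ (rmap S (x, y)).2 \in Y.
Definition restrict_map (S : sol) (Y : {set carrier S})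
  (p : {x : carrier S | x \in Y} * {x : carrier S | x \in Y})
  : {x : carrier S | x \in Y} * {x : carrier S | x \in Y} :=
  let: (a, b) := p in
  let q := rmap S (val a, val b) in (insubd a q.1, insubd b q.2).
Definition restrict (S : sol) (Y : {set carrier S}) : sol :=
  existT (fun T : finType => (T * T -> T * T)%type)
    ({x : carrier S | x \in Y} : finType) (restrict_map S Y).
Definition nd_invariant (S : sol) (Y : {set carrier S}) : Prop :=
  invariant S Y /\ nd_inv_sol (restrict S Y).
Definition decomposable (S : sol) : Prop :=
  exists Y Z : {set carrier S},
    [/\ Y != set0, Z != set0, [disjoint Y & Z], Y :|: Z = setT
      & nd_invariant S Y /\ nd_invariant S Z].
Definition indecomposable (S : sol) : Prop := ~ decomposable S.

Definition condC (S : sol) (e : carrier S) : Prop :=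
  exists l, forall s : carrier S, exists ids : seq (carrier S),
    size ids = l /\ foldr (fun i y => sig_ S i y) e ids = s.

(* Both coordinate projections of the induced pair onto (X, r) are morphisms of
   solutions and together they are injective; so the Yang-Baxter equation,
   non-degeneracy and involutivity of r~ are inherited coordinatewise, and so are
   the class identities and condition (C) (pair up two words by zipping them).  A
   decomposition X = Y + Z lifts to Y x X + Z x X.  For retractions, the relation
   sigma_x = sigma_y is a congruence thanks to the identity
   sigma_x sigma_(sigma_x^-1 u) = sigma_u sigma_(sigma_u^-1 x); since
   g_(i,k) = sigma_i x sigma_k, this gives Ret(X^2, r~) = Ret(X, r)^2, hence
   |Ret^l(X^2)| = |Ret^l(X)|^2, which is 1 exactly when |Ret^l(X)| is.  Finally,
   condition (C) alone implies indecomposability: by non-degeneracy each part of a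
   decomposition is stable under every sigma_x, and the orbit of the base point
   under words in the sigma_x is everything. *)

From Pilot Require Import Defs.
From mathcomp Require Import all_boot all_fingroup.

Set Implicit Arguments.
Unset Strict Implicit.

Lemma surj_cancel (T : finType) (U : eqType) (f : T -> U) :
  (forall u, exists t, f t = u) -> exists s : U -> T, cancel s f.
Proof.
move=> f_surj; have f_surjb u : exists t, f t == u by have [t <-] := f_surj u; exists t.
by exists (fun u => xchoose (f_surjb u)) => u; apply/eqP/(xchooseP (f_surjb u)).
Qed.

Lemma surjF_bij (T : finType) (f : T -> T) : (forall y, exists x, f x = y) -> bijective f.
Proof.
move=> /surj_cancel[g gK].
by apply: (bij_can_bij (injF_bij (can_inj gK))); exact: gK.
Qed.

Lemma perm_inverse_iter (T : finType) (f g : T -> T) :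
  cancel f g -> cancel g f -> exists k, f =1 iter k g.
Proof.
move=> fK gK; pose p := perm (can_inj gK); have pE : p =1 g := permE _.
exists #[p]%g.-1 => x; rewrite -(eq_iter pE) -permX -invg_expg.
by apply: (@perm_inj _ p); rewrite permKV pE fK.
Qed.

Lemma rmapE (S : sol) x y : rmap S (x, y) = (sig_ S x y, gam S y x).
Proof. by rewrite /sig_ /gam; case: rmap. Qed.

Definition map_pair (T U : Type) (f : T -> U) (p : T * T) : U * U := (f p.1, f p.2).
Definition map_triple (T U : Type) (f : T -> U) (t : T * T * T) : U * U * U :=
  (f t.1.1, f t.1.2, f t.2).

Definition braid_l (T : Type) (r : T * T -> T * T) : T * T * T -> T * T * T :=
  fun t => r12 _ r (r23 _ r (r12 _ r t)).
Definition braid_r (T : Type) (r : T * T -> T * T) : T * T * T -> T * T * T :=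
  fun t => r23 _ r (r12 _ r (r23 _ r t)).

Definition hom (A B : sol) (f : carrier A -> carrier B) : Prop :=
  forall p, rmap B (map_pair f p) = map_pair f (rmap A p).

Section Homomorphisms.

Variables (A B : sol) (f : carrier A -> carrier B).
Hypothesis hom_f : hom f.

Lemma hom_sig x y : f (sig_ A x y) = sig_ B (f x) (f y).
Proof. by rewrite /sig_ (hom_f (x, y)). Qed.

Lemma hom_gam x y : f (gam A y x) = gam B (f y) (f x).
Proof. by rewrite /gam (hom_f (x, y)). Qed.

Lemma hom_r12 t : r12 _ (rmap B) (map_triple f t) = map_triple f (r12 _ (rmap A) t).
Proof. by case: t => [[x y] z]; rewrite /r12 /= (hom_f (x, y)); case: rmap. Qed.

Lemma hom_r23 t : r23 _ (rmap B) (map_triple f t) = map_triple f (r23 _ (rmap A) t).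
Proof. by case: t => [[x y] z]; rewrite /r23 /= (hom_f (y, z)); case: rmap. Qed.

Lemma hom_braid_l t : braid_l (rmap B) (map_triple f t) = map_triple f (braid_l (rmap A) t).
Proof. by rewrite /braid_l !(hom_r12, hom_r23). Qed.

Lemma hom_braid_r t : braid_r (rmap B) (map_triple f t) = map_triple f (braid_r (rmap A) t).
Proof. by rewrite /braid_r !(hom_r12, hom_r23). Qed.

Lemma hom_comp (C : sol) (g : carrier B -> carrier C) : hom g -> hom (g \o f).
Proof. by move=> hom_g p; rewrite -[map_pair _ p]/(map_pair g (map_pair f p)) hom_g hom_f. Qed.

End Homomorphisms.

Lemma hom_id (A : sol) : hom (@id (carrier A)).
Proof. by move=> [x y]; rewrite /map_pair /=; case: rmap. Qed.

Lemma nd_inv_sol_joint_inj (A B : sol) (f g : carrier A -> carrier B) :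
  hom f -> hom g -> (forall a b, f a = f b -> g a = g b -> a = b) ->
  nd_inv_sol B -> nd_inv_sol A.
Proof.
move=> hom_f hom_g fg_inj [ybeB ndB invB].
have pair_inj p q : map_pair f p = map_pair f q -> map_pair g p = map_pair g q -> p = q.
  by case: p q => [? ?] [? ?] [/fg_inj e1 /fg_inj e2] [/e1-> /e2->].
have triple_inj t u :
    map_triple f t = map_triple f u -> map_triple g t = map_triple g u -> t = u.
  case: t u => [[? ?] ?] [[? ?] ?] [/fg_inj e1 /fg_inj e2 /fg_inj e3].
  by case=> /e1-> /e2-> /e3->.
split.
- move=> t; apply: triple_inj.
  + by rewrite -(hom_braid_l hom_f) -(hom_braid_r hom_f); apply: ybeB.
  + by rewrite -(hom_braid_l hom_g) -(hom_braid_r hom_g); apply: ybeB.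
- move=> a; split; apply: injF_bij => b b' e; apply: fg_inj.
  + by apply: (bij_inj (ndB (f a)).1); rewrite -!(hom_sig hom_f) e.
  + by apply: (bij_inj (ndB (g a)).1); rewrite -!(hom_sig hom_g) e.
  + by apply: (bij_inj (ndB (f a)).2); rewrite -!(hom_gam hom_f) e.
  + by apply: (bij_inj (ndB (g a)).2); rewrite -!(hom_gam hom_g) e.
- by move=> p; apply: pair_inj; rewrite -?hom_f -?hom_g invB.
Qed.

Lemma nd_inv_sol_surj (A B : sol) (f : carrier A -> carrier B) :
  (forall b, exists a, f a = b) -> hom f -> nd_inv_sol A -> nd_inv_sol B.
Proof.
move=> f_surj hom_f [ybeA ndA invA].
have triple_surj t : exists u, map_triple f u = t.
  case: t => [[x y] z]; have [a <-] := f_surj x; have [b <-] := f_surj y.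
  by have [c <-] := f_surj z; exists (a, b, c).
split.
- move=> t; have [u <-] := triple_surj t.
  change (braid_l (rmap B) (map_triple f u) = braid_r (rmap B) (map_triple f u)).
  by rewrite (hom_braid_l hom_f) (hom_braid_r hom_f); congr (map_triple f _); apply: ybeA.
- move=> x; have [a <-] := f_surj x; split; apply: surjF_bij => y; have [c <-] := f_surj y.
  + by have [h _ hK] := (ndA a).1; exists (f (h c)); rewrite -(hom_sig hom_f) hK.
  + by have [h _ hK] := (ndA a).2; exists (f (h c)); rewrite -(hom_gam hom_f) hK.
- case=> x y; have [a <-] := f_surj x; have [b <-] := f_surj y.
  by rewrite -[(f a, f b)]/(map_pair f (a, b)) !hom_f invA.
Qed.

Section Induced.

Variable S : sol.

Lemma sig_induced (i k j l : carrier S) :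
  sig_ (induced S) ((i, k) : carrier (induced S)) (j, l) = (sig_ S i j, sig_ S k l).
Proof. by []. Qed.

Lemma hom_induced_fst : @hom (induced S) S (fun p => p.1).
Proof. by case=> [[i k] [j l]]; rewrite /map_pair /= rmapE. Qed.

Lemma hom_induced_snd : @hom (induced S) S (fun p => p.2).
Proof. by case=> [[i k] [j l]]; rewrite /map_pair /= rmapE. Qed.

Lemma induced_nd : nd_inv_sol S -> nd_inv_sol (induced S).
Proof.
apply: nd_inv_sol_joint_inj hom_induced_fst hom_induced_snd _.
by case=> [? ?] [? ?] /= -> ->.
Qed.

Lemma card_induced : #|carrier (induced S)| = #|carrier S| ^ 2.
Proof. by rewrite card_prod. Qed.

End Induced.

Lemma iter_induced_nd (S : sol) k : nd_inv_sol S -> nd_inv_sol (iter k induced S).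
Proof. by move=> HS; elim: k => //= k; apply: induced_nd. Qed.

Lemma card_iter_induced (S : sol) k :
  #|carrier (iter k induced S)| = #|carrier S| ^ (2 ^ k).
Proof. by elim: k => [|k IHk] /=; rewrite ?expn1 // card_induced IHk -expnM expnSr. Qed.

Definition sig_eqv (S : sol) (x y : carrier S) : Prop := sig_ S x =1 sig_ S y.

Section RetractionRelation.

Variable S : sol.
Hypothesis HS : nd_inv_sol S.

Lemma sig_inj x : injective (sig_ S x).
Proof. by case: HS => _ ndS _; apply: bij_inj (ndS x).1. Qed.

Local Notation sig_inv x := (invF (@sig_inj x)).

Lemma sig_sig x y z :
  sig_ S (sig_ S x y) (sig_ S (gam S y x) z) = sig_ S x (sig_ S y z).
Proof.
case: HS => ybeS _ _; move/(congr1 (fun t => t.1.1)): (ybeS (x, y, z)).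
by rewrite /r12 /r23 /= !rmapE.
Qed.

Lemma gam_sig_inv x y : gam S y x = sig_inv (sig_ S x y) x.
Proof.
case: HS => _ _ invS; apply: (@sig_inj (sig_ S x y)); rewrite f_invF.
by move/(congr1 fst): (invS (x, y)); rewrite !rmapE.
Qed.

Lemma sig_sig_inv x u z :
  sig_ S x (sig_ S (sig_inv x u) z) = sig_ S u (sig_ S (sig_inv u x) z).
Proof. by rewrite -sig_sig gam_sig_inv !f_invF. Qed.

Lemma sig_inv_eqv u x x' : sig_eqv x x' -> sig_eqv (sig_inv u x) (sig_inv u x').
Proof.
move=> exx' z; apply: (@sig_inj u).
by rewrite -(sig_sig_inv x) -(sig_sig_inv x') (eq_invF (@sig_inj x) (@sig_inj x') exx') exx'.
Qed.

Lemma sig_eqv_r u y y' : sig_eqv y y' -> sig_eqv (sig_ S u y) (sig_ S u y').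
Proof.
(* On a finite set, sig_ S u is an iterate of its inverse, which preserves sig_eqv. *)
have [k sig_iter] := perm_inverse_iter (invF_f (@sig_inj u)) (f_invF (@sig_inj u)).
by rewrite !sig_iter {sig_iter}; elim: k => //= k IHk /IHk; apply: sig_inv_eqv.
Qed.

Lemma sig_eqv_sig x x' y y' :
  sig_eqv x x' -> sig_eqv y y' -> sig_eqv (sig_ S x y) (sig_ S x' y').
Proof. by move=> exx' eyy' z; rewrite -exx'; apply: sig_eqv_r. Qed.

Lemma sig_eqv_gam x x' y y' :
  sig_eqv x x' -> sig_eqv y y' -> sig_eqv (gam S y x) (gam S y' x').
Proof.
move=> exx' eyy'; rewrite !gam_sig_inv.
by rewrite (eq_invF _ (@sig_inj (sig_ S x' y')) (sig_eqv_sig exx' eyy')); apply: sig_inv_eqv.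
Qed.

End RetractionRelation.

Section Retraction.

Variable S : sol.

Lemma to_ret_eq x y : to_ret S x = to_ret S y <-> sig_eqv x y.
Proof.
split=> [/(congr1 val) /= eq_cls z | exy].
  have : x \in cls S x by rewrite inE; apply/forallP.
  by rewrite eq_cls inE => /forallP /(_ z) /eqP.
by apply: val_inj; apply/setP => z; rewrite !inE; apply: eq_forallb => w; rewrite exy.
Qed.

Lemma to_ret_rep A : to_ret S (rep S A) = A.
Proof. by apply: val_inj; apply/esym/eqP/(xchooseP (elimT existsP (valP A))). Qed.

Lemma to_ret_surj A : exists x, to_ret S x = A.
Proof. by exists (rep S A); apply: to_ret_rep. Qed.

Lemma rep_eqv x : sig_eqv (rep S (to_ret S x)) x.
Proof. by apply/to_ret_eq; rewrite to_ret_rep. Qed.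

Hypothesis HS : nd_inv_sol S.

Lemma hom_to_ret : @hom S (ret S) (to_ret S).
Proof.
case=> x y; rewrite /map_pair rmapE /=; congr pair; apply/to_ret_eq.
  exact: (sig_eqv_sig HS (rep_eqv x) (rep_eqv y)).
exact: (sig_eqv_gam HS (rep_eqv x) (rep_eqv y)).
Qed.

Lemma ret_nd : nd_inv_sol (ret S).
Proof. by apply: (nd_inv_sol_surj _ hom_to_ret HS); apply: to_ret_surj. Qed.

End Retraction.

Lemma iter_ret_nd (S : sol) l : nd_inv_sol S -> nd_inv_sol (iter l ret S).
Proof. by move=> HS; elim: l => //= l; apply: ret_nd. Qed.

Definition iso (A B : sol) : Prop := exists2 f : carrier A -> carrier B, bijective f & hom f.

Lemma iso_refl (A : sol) : iso A A.
Proof. by exists id; [exists id | apply: hom_id]. Qed.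

Lemma iso_trans (A B C : sol) : iso A B -> iso B C -> iso A C.
Proof.
by case=> f bij_f hom_f [g bij_g hom_g]; exists (g \o f); [apply: bij_comp | apply: hom_comp].
Qed.

Lemma card_iso (A B : sol) : iso A B -> #|carrier A| = #|carrier B|.
Proof. by case=> f bij_f _; apply: bij_eq_card bij_f. Qed.

Lemma iso_same_kernel (S A B : sol) (f : carrier S -> carrier A) (g : carrier S -> carrier B) :
  (forall a, exists x, f x = a) -> (forall b, exists x, g x = b) ->
  hom f -> hom g -> (forall x y, f x = f y <-> g x = g y) -> iso A B.
Proof.
move=> f_surj g_surj hom_f hom_g same_ker.
have [sf sfK] := surj_cancel f_surj; have [sg sgK] := surj_cancel g_surj.
have sfE x : g (sf (f x)) = g x by apply/same_ker; rewrite sfK.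
have sgE x : f (sg (g x)) = f x by apply/same_ker; rewrite sgK.
exists (g \o sf); first by exists (f \o sg) => a /=; rewrite ?sfE ?sgE ?sfK ?sgK.
case=> a b; have [x <-] := f_surj a; have [y <-] := f_surj b.
rewrite -[(f x, f y)]/(map_pair f (x, y)) hom_f /map_pair /= !sfE.
exact: (hom_g (x, y)).
Qed.

Lemma iso_ret (A B : sol) : nd_inv_sol B -> iso A B -> iso (ret A) (ret B).
Proof.
move=> HB [f bij_f hom_f]; have [g _ gK] := bij_f.
have HA := nd_inv_sol_joint_inj hom_f hom_f (fun a b e _ => bij_inj bij_f e) HB.
apply: (iso_same_kernel _ _ (hom_to_ret HA) (hom_comp hom_f (hom_to_ret HB))).
- exact: to_ret_surj.
- by move=> b; have [y <-] := to_ret_surj b; exists (g y); rewrite /= gK.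
- move=> x y /=; split=> /to_ret_eq exy; apply/to_ret_eq => z.
    by rewrite -[z]gK -!(hom_sig hom_f) exy.
  by apply: (bij_inj bij_f); rewrite !(hom_sig hom_f) exy.
Qed.

Lemma hom_induced_pair (A B : sol) (f : carrier A -> carrier B) :
  hom f -> @hom (induced A) (induced B) (fun p => (f p.1, f p.2)).
Proof.
by move=> hom_f [[i k] [j l]]; rewrite /map_pair /= !(hom_sig hom_f) !(hom_gam hom_f).
Qed.

Lemma sig_eqv_induced (S : sol) (x1 x2 y1 y2 : carrier S) :
  @sig_eqv (induced S) (x1, x2) (y1, y2) <-> sig_eqv x1 y1 /\ sig_eqv x2 y2.
Proof.
split=> [e | [e1 e2] [z1 z2]]; last by rewrite !sig_induced e1 e2.
by split=> z; [case: (e (z, x2)) | case: (e (x1, z))].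
Qed.

Lemma ret_induced_iso (S : sol) : nd_inv_sol S -> iso (ret (induced S)) (induced (ret S)).
Proof.
move=> HS; apply: (iso_same_kernel _ _ (hom_to_ret (induced_nd HS))
                                  (hom_induced_pair (hom_to_ret HS))).
- exact: to_ret_surj.
- case=> [A B]; have [x <-] := to_ret_surj A; have [y <-] := to_ret_surj B.
  by exists (x, y).
- case=> [x1 x2] [y1 y2]; split=> [/(to_ret_eq (S := induced S)) e | e].
    by have [/(to_ret_eq (S := S))-> /(to_ret_eq (S := S))->] := proj1 (sig_eqv_induced _ _ _ _) e.
  apply/to_ret_eq/sig_eqv_induced.
  by split; apply/(to_ret_eq (S := S)); [apply: (congr1 fst e) | apply: (congr1 snd e)].
Qed.

Lemma iter_ret_induced_iso (S : sol) l :
  nd_inv_sol S -> iso (iter l ret (induced S)) (induced (iter l ret S)).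
Proof.
move=> HS; elim: l => [|l IHl] /=; first exact: iso_refl.
apply: iso_trans (ret_induced_iso (iter_ret_nd l HS)).
by apply: iso_ret IHl; apply/induced_nd/iter_ret_nd.
Qed.

Lemma card_iter_ret_induced_eq1 (S : sol) l : nd_inv_sol S ->
  #|carrier (iter l ret (induced S))| = 1 <-> #|carrier (iter l ret S)| = 1.
Proof.
move=> HS; rewrite (card_iso (iter_ret_induced_iso l HS)) card_induced.
by split=> [/eqP | ->//]; rewrite (eqn_sqr _ 1) => /eqP.
Qed.

Lemma irretractable_induced (S : sol) :
  nd_inv_sol S -> irretractable S -> irretractable (induced S).
Proof. by move=> HS irrS l /(card_iter_ret_induced_eq1 l HS); apply: irrS. Qed.

Lemma mp_level_induced (S : sol) l :
  nd_inv_sol S -> mp_level S l -> mp_level (induced S) l.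
Proof.
move=> HS [retl_1 ret_neq1]; split=> [|l' lt_l']; first exact/card_iter_ret_induced_eq1.
by move/(card_iter_ret_induced_eq1 l' HS); apply: ret_neq1.
Qed.

Lemma sig_Dmap (S : sol) : nondeg S -> forall x, sig_ S x (Dmap S x) = x.
Proof.
move=> ndS x; rewrite /Dmap; case: pickP => [y /eqP // | no_preimage].
by have [g _ gK] := (ndS x).1; move: (no_preimage (g x)); rewrite gK eqxx.
Qed.

Section Class.

Variable S : sol.
Hypothesis HS : nd_inv_sol S.

Lemma Dmap_induced x y : Dmap (induced S) (x, y) = (Dmap S x, Dmap S y).
Proof.
have [_ ndS _] := HS; have [_ ndI _] := induced_nd HS.
by apply: (bij_inj (ndI (x, y)).1); rewrite (sig_Dmap ndI) sig_induced !(sig_Dmap ndS).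
Qed.

Lemma iter_Dmap_induced i x y :
  iter i (Dmap (induced S)) (x, y) = (iter i (Dmap S) x, iter i (Dmap S) y).
Proof. by elim: i => //= i ->; rewrite Dmap_induced. Qed.

Lemma sig_chain_induced x y m a b :
  sig_chain (induced S) (x, y) m (a, b) = (sig_chain S x m a, sig_chain S y m b).
Proof. by rewrite /sig_chain; elim: (iota 0 m) a b => //= i s IHs a b; rewrite IHs iter_Dmap_induced. Qed.

Lemma class_eq_induced m : class_eq (induced S) m <-> class_eq S m.
Proof.
split=> [cl x a | cl [x y] [a b]]; last by rewrite sig_chain_induced !cl.
by move: (cl (x, x) (a, a)); rewrite sig_chain_induced => -[].
Qed.

Lemma is_class_induced m : is_class S m -> is_class (induced S) m.
Proof.
case=> m_gt0 /class_eq_induced cl_m min_m; split=> // m' m'_gt0 lt_m'm.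
by move/class_eq_induced; apply: min_m.
Qed.

End Class.

Lemma invariant_nd_invariant (S : sol) (Y : {set carrier S}) :
  nd_inv_sol S -> Defs.invariant S Y -> nd_invariant S Y.
Proof.
move=> HS invY; split=> //.
have hom_val : @hom (restrict S Y) S val.
  case=> a b; have [Ya Yb] := invY _ _ (valP a) (valP b).
  by rewrite /map_pair /= !insubdK //; case: rmap.
exact: (nd_inv_sol_joint_inj hom_val hom_val (fun a b e _ => val_inj e) HS).
Qed.

Lemma invariant_induced_fst (S : sol) (Y : {set carrier S}) : Defs.invariant S Y ->
  Defs.invariant (induced S) [set p : carrier (induced S) | p.1 \in Y].
Proof. by move=> invY [x1 x2] [y1 y2]; rewrite !inE; apply: invY. Qed.

Lemma decomposable_induced (S : sol) :
  nd_inv_sol S -> decomposable S -> decomposable (induced S).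
Proof.
move=> HS [Y [Z [Y_n0 Z_n0 disYZ YUZ [[invY _] [invZ _]]]]].
pose lift (W : {set carrier S}) := [set p : carrier (induced S) | p.1 \in W].
have lift_n0 W : W != set0 -> lift W != set0.
  by case/set0Pn=> w Ww; apply/set0Pn; exists (w, w); rewrite inE.
exists (lift Y), (lift Z); split; rewrite ?lift_n0 //.
- by apply/pred0P => p; rewrite /= !inE; apply: (pred0P disYZ).
- by apply/setP => p; rewrite !inE -in_setU YUZ inE.
- by split; apply: (invariant_nd_invariant (induced_nd HS)); apply: invariant_induced_fst.
Qed.

Lemma sig_partition_closed (S : sol) (Y Z : {set carrier S}) :
  nondeg S -> Defs.invariant S Y -> Defs.invariant S Z ->
  [disjoint Y & Z] -> Y :|: Z = setT -> forall x y, y \in Y -> sig_ S x y \in Y.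
Proof.
move=> ndS invY invZ disYZ YUZ x y Yy.
have inYZ w : w \in Y :|: Z by rewrite YUZ inE.
have /setUP[Yx | Zx] := inYZ x; first by case: (invY x y Yx Yy).
have sig_inj := bij_inj (ndS x).1.
have sigZ : [set sig_ S x z | z in Z] = Z.
  apply/eqP; rewrite eqEcard card_imset // leqnn andbT.
  by apply/subsetP => _ /imsetP[z Zz ->]; case: (invZ x z Zx Zz).
have /setUP[// | ] := inYZ (sig_ S x y).
rewrite -sigZ => /imsetP[z Zz /sig_inj eq_yz].
by move: (pred0P disYZ y); rewrite /= Yy eq_yz Zz.
Qed.

Lemma condC_indecomposable (S : sol) e : nondeg S -> condC S e -> indecomposable S.
Proof.
move=> ndS [l reach] [Y [Z [Y_n0 Z_n0 disYZ YUZ [[invY _] [invZ _]]]]].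
have closed W W' : Defs.invariant S W -> Defs.invariant S W' -> [disjoint W & W'] ->
    W :|: W' = setT -> e \in W -> W' != set0 -> False.
  move=> invW invW' disW YUW eW /set0Pn[w W'w].
  suff Ww : w \in W by move: (pred0P disW w); rewrite /= Ww W'w.
  have [ids [_ <-]] := reach w.
  by elim: ids => //= i ids; apply: (sig_partition_closed ndS invW invW' disW YUW).
have /setUP[eY | eZ] : e \in Y :|: Z by rewrite YUZ inE.
  exact: (closed Y Z).
by apply: (closed Z Y) => //; rewrite 1?disjoint_sym // setUC.
Qed.

Lemma foldr_sig_induced_zip (S : sol) (e1 e2 : carrier S) (ids1 ids2 : seq (carrier S)) :
  size ids1 = size ids2 ->
  foldr (fun i y => sig_ (induced S) i y) ((e1, e2) : carrier (induced S)) (zip ids1 ids2)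
  = (foldr (fun i y => sig_ S i y) e1 ids1, foldr (fun i y => sig_ S i y) e2 ids2).
Proof. by elim: ids1 ids2 => [|i1 ids1 IH] [|i2 ids2] //= [/IH ->]. Qed.

Lemma condC_induced (S : sol) e : condC S e -> condC (induced S) ((e, e) : carrier (induced S)).
Proof.
case=> l reach; exists l => -[s1 s2].
have [ids1 [size1 <-]] := reach s1; have [ids2 [size2 <-]] := reach s2.
exists (zip ids1 ids2).
by rewrite size_zip foldr_sig_induced_zip size1 ?size2 ?minnn.
Qed.

Lemma condC_iter_induced (S : sol) e k :
  condC S e -> exists e', condC (iter k induced S) e'.
Proof.
move=> CSe; elim: k => [|k [e' IHk]] /=; first by exists e.
by exists (e', e'); apply: condC_induced.
Qed.

Lemma iter_induced_indecomposable (S : sol) e k :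
  nd_inv_sol S -> condC S e -> indecomposable (iter k induced S).
Proof.
move=> HS /(condC_iter_induced k)[e' CSe'].
by have [_ ndk _] := iter_induced_nd k HS; apply: condC_indecomposable ndk CSe'.
Qed.

Unset Implicit Arguments.

Theorem theorem3p12 (n : nat) (r : 'I_n * 'I_n -> 'I_n * 'I_n) :
  nd_inv_sol (sol_of n r) ->
  (forall k, 0 < k ->
     nd_inv_sol (iter k induced (sol_of n r)) /\
     #|carrier (iter k induced (sol_of n r))| = n ^ (2 ^ k)) /\
  (irretractable (sol_of n r) -> irretractable (induced (sol_of n r))) /\
  (forall l, mp_level (sol_of n r) l -> mp_level (induced (sol_of n r)) l) /\
  (decomposable (sol_of n r) -> decomposable (induced (sol_of n r))) /\
  (forall m, is_class (sol_of n r) m -> is_class (induced (sol_of n r)) m) /\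
  (forall h : 0 < n,
     indecomposable (sol_of n r) -> condC (sol_of n r) (Ordinal h) ->
     [/\ indecomposable (induced (sol_of n r)),
         condC (induced (sol_of n r))
           ((Ordinal h, Ordinal h) : carrier (induced (sol_of n r)))
       & forall k, 0 < k -> indecomposable (iter k induced (sol_of n r))]).
Proof.
move=> HS; split.
  by move=> k _; rewrite card_iter_induced card_ord; split=> //; apply: iter_induced_nd.
split; first exact: irretractable_induced.
split; first by move=> l; apply: mp_level_induced.
split; first exact: decomposable_induced.
split; first by move=> m; apply: is_class_induced.
move=> h _ CS; split=> [|| k _]; last exact: iter_induced_indecomposable CS.
  exact: (iter_induced_indecomposable (k := 1) HS CS).
exact: condC_induced.
Qed.
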